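(* Let $n\ge 2$, identify $\mathbb{C}^n\cong\mathbb{R}^{2n}$ with its standard complex structure and coordinates $z_1,\dots,z_n$, and let $w=\mathrm{Re}(dz_1\wedge\cdots\wedge dz_n)$. Let $P\subset\mathbb{C}^n$ be a complex linear subspace of real codimension two. Let $k\in\mathbb{N}\setminus\{0\}$ and $\alpha$ satisfy $k\alpha=2\pi$ and $0<\alpha\le\pi$. For $\beta\in\mathbb{R}$, let $R_{(\beta,P)}$ denote the rotation of $\mathbb{R}^{2n}$ about $P$ by angle $\beta$, i.e. the orthogonal map fixing $P$ pointwise and rotating the real $2$-plane $P^\perp$ by the angle $\beta$. For $i=0,1,\dots,k-1$ let $w_i=R_{(i\alpha,P)}(w)$ be the image of the form $w$ under this rotation. Then each $w_i$ is a special Lagrangian calibration, and $$\sum_{i=0}^{k-1} w_i=0.$$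
   Context: A special Lagrangian (SL) calibration on $\mathbb{C}^n$ is an $n$-form of the form $\mathrm{Re}\big(e^{i\theta}\,d\zeta_1\wedge\cdots\wedge d\zeta_n\big)$, $\theta\in\mathbb{R}$, where $\zeta_1,\dots,\zeta_n$ are complex linear coordinates obtained from $z_1,\dots,z_n$ by a unitary change of coordinates (equivalently, the transform of $\mathrm{Re}(dz_1\wedge\cdots\wedge dz_n)$ by a complex-linear isometry). *)

From HB Require Import structures.
From mathcomp Require Import all_boot all_order all_algebra.
From mathcomp Require Import complex.
From mathcomp Require Import all_classical all_reals all_analysis.
Set Implicit Arguments. Unset Strict Implicit. Unset Printing Implicit Defensive.
Import Order.TTheory GRing.Theory Num.Theory.
Local Open Scope ring_scope.

Section Defs.
Variables (R : realType) (n : nat).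
Local Notation C := R[i].

Definition vec := 'rV[C]_n.

(* A real n-form on C^n = R^{2n}, viewed as a function of n vectors
   (alternation/multilinearity are automatic for the forms we build). *)
Definition nform := ('I_n -> vec) -> R.

Definition rows (v : 'I_n -> vec) : 'M[C]_n := \matrix_(i < n) v i.

Definition adjmx (A : 'M[C]_n) : 'M[C]_n := (map_mx (@conjc R) A)^T.

Definition hdot (x y : vec) : C := (x *m (map_mx (@conjc R) y)^T) 0 0.

(* w = Re(dz_1 /\ ... /\ dz_n):  (dz_1/\../\dz_n)(v_1..v_n) = det [dz_i(v_j)] *)
Definition w0 : nform := fun v => complex.Re (\det (rows v)).

Definition unitary (U : 'M[C]_n) : Prop := U *m adjmx U = 1%:M.

Definition expi (t : R) : C := (cos t +i* sin t)%C.

(* SL calibration: Re(e^{i theta} dzeta_1/\../\dzeta_n), zeta = U z, U unitary.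
   zeta(v) = v *m U^T for a row vector v. *)
Definition SL_calibration (om : nform) : Prop :=
  exists (theta : R) (U : 'M[C]_n), unitary U /\
    forall v : 'I_n -> vec, om v = complex.Re (expi theta * \det (rows v *m U^T)).

Definition inP (P : 'M[C]_n) (x : vec) : Prop := (x <= P)%MS.

(* real orthogonal complement of P (standard Euclidean product on R^{2n}
   is Re of the Hermitian product) *)
Definition perpP (P : 'M[C]_n) (y : vec) : Prop :=
  forall p : vec, inP P p -> complex.Re (hdot p y) = 0.

(* f is the rotation R_(beta,P) of R^{2n} about P by the angle beta:
   real-linear, fixing P pointwise, and rotating the real plane P^perp
   (a complex line) by beta, i.e. acting on it by multiplication by e^{i beta}
   (orientation of P^perp induced by the complex structure). *)
Definition is_rotation (beta : R) (P : 'M[C]_n) (f : vec -> vec) : Prop :=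
  [/\ (forall x y, f (x + y) = f x + f y),
      (forall (r : R) x, f ((r%:C)%C *: x) = (r%:C)%C *: f x),
      (forall x, inP P x -> f x = x) &
      (forall y, perpP P y -> f y = expi beta *: y)].

(* om' is the image (push-forward) of om under the bijective linear map f:
   om'(f v_1, ..., f v_n) = om(v_1, ..., v_n). *)
Definition is_image_form (f : vec -> vec) (om om' : nform) : Prop :=
  forall v : 'I_n -> vec, om' (fun j => f (v j)) = om v.

End Defs.

From HB Require Import structures.
From mathcomp Require Import all_boot all_order all_algebra.
From mathcomp Require Import complex ring lra.
From mathcomp Require Import all_classical all_reals all_analysis.
Import Order.TTheory GRing.Theory Num.Theory.
Set Implicit Arguments. Unset Strict Implicit. Unset Printing Implicit Defensive.
Local Open Scope ring_scope.

(* A complex hyperplane P is the kernel of x |-> x y^T for a nonzero row y,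
   and its real orthogonal complement is the complex line spanned by conj y.
   The rotation about P by beta is therefore the linear map
   1 + (e^{i beta} - 1) Q, with Q the Hermitian projection onto that line, and
   by the matrix determinant lemma its complex determinant is e^{i beta}.
   Pulling the holomorphic volume form back along it multiplies it by this
   determinant, so w_i is Re(exp(-sqrt(-1) i alpha) dz_1 /\ ... /\ dz_n), an
   SL calibration, and the sum of the w_i carries the factor sum_{i<k} z^i
   with z = exp(-sqrt(-1) alpha) a k-th root of unity different from 1, which
   vanishes. *)

Lemma det1Dmul (F : comNzRingType) n (s : 'cV[F]_n) (u : 'rV_n) :
  \det (1%:M + s *m u) = 1 + (u *m s) 0 0.
Proof.
(* The two block factorisations of [[1, -s], [u, 1]] via Schur complements. *)
have E1 : block_mx 1%:M (-s) u 1%:M =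
   block_mx 1%:M 0 u 1%:M *m block_mx 1%:M (-s) 0 (1%:M + u *m s).
  rewrite mulmx_block !mul1mx !mul0mx ?mulmx0 !addr0 ?add0r ?mulmx1 ?mulmxN.
  by rewrite addrC addrK.
have E2 : block_mx 1%:M (-s) u 1%:M =
   block_mx (1%:M + s *m u) (-s) 0 1%:M *m block_mx 1%:M 0 u 1%:M.
  rewrite mulmx_block !mul1mx !mul0mx ?mulmx0 ?addr0 ?add0r ?mulmx1 ?mulNmx.
  by rewrite addrK.
have := congr1 determinant E1; rewrite E2 !det_mulmx !det_lblock !det_ublock.
by rewrite !det1 !mul1r !mulr1 det_mx11 mxE mxE eqxx => ->.
Qed.

Lemma sum_expr_eq0 (F : idomainType) (z : F) k :
  z ^+ k = 1 -> z != 1 -> \sum_(i < k) z ^+ i = 0.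
Proof.
move=> zk z1; apply/eqP; have /eqP := subrX1 z k.
by rewrite zk subrr eq_sym mulf_eq0 subr_eq0 (negbTE z1).
Qed.

Section Expi.
Variable R : realType.
Implicit Types a b : R.

Lemma expi0 : expi 0 = 1 :> R[i].
Proof. by rewrite /expi cos0 sin0. Qed.

Lemma expiD a b : expi (a + b) = expi a * expi b.
Proof.
rewrite /expi cosD sinD; apply/eqP; rewrite eq_complex /=.
by apply/andP; split; apply/eqP; ring.
Qed.

Lemma expiMn a i : expi (i%:R * a) = expi a ^+ i.
Proof.
elim: i => [|i IH]; first by rewrite mul0r expi0 expr0.
by rewrite -addn1 natrD mulrDl mul1r expiD IH addn1 exprSr.
Qed.

Lemma expiN a : expi (- a) = (expi a)^-1.
Proof. by apply/esym/mulr1_eq; rewrite -expiD subrr expi0. Qed.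

Lemma expi_neq0 a : expi a != 0.
Proof.
apply: contra_neq (@oner_neq0 R[i]) => ea0.
by rewrite -expi0 -(subrr a) expiD ea0 mul0r.
Qed.

Lemma expi2pi : expi (2 * pi) = 1 :> R[i].
Proof. by rewrite /expi mulr_natl cos2pi sin2pi. Qed.

Lemma expi_neq1 a : 0 < a <= pi -> expi a != 1.
Proof.
case/andP=> a_gt0; rewrite le_eqVlt => /predU1P[->|a_ltpi].
  rewrite /expi cospi eq_complex /= negb_and; apply/orP; left.
  by apply/eqP; lra.
by rewrite /expi eq_complex /= negb_and (gt_eqF (sin_gt0_pi _)) ?a_gt0 ?orbT.
Qed.

End Expi.

Lemma rows_mulmx (R : realType) n (v : 'I_n -> vec R n) (M : 'M[R[i]]_n) :
  rows (fun j => v j *m M) = rows v *m M.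
Proof. by apply/row_matrixP => j; rewrite row_mul !rowK. Qed.

Section HyperplaneRotation.
Variables (R : realType) (n : nat) (P : 'M[R[i]]_n).
Hypotheses (n_gt0 : (0 < n)%N) (rankP : \rank P = n.-1).
Local Notation C := R[i].
Local Notation conjmx := (map_mx (@conjc R)).

Definition hyperplane_normal : 'rV[C]_n := nz_row (kermx P^T).
Local Notation y := hyperplane_normal.
Local Notation u := (conjmx y).

Lemma hyperplane_normal_neq0 : y != 0.
Proof.
rewrite nz_row_eq0 -mxrank_eq0 mxrank_ker mxrank_tr rankP.
by rewrite -{1}(prednK n_gt0) subSnn.
Qed.

Lemma hdot_conj_normal x : hdot x u = (x *m y^T) 0 0.
Proof.
rewrite /hdot; congr ((x *m _^T) 0 0).
by apply/matrixP=> i j; rewrite !mxE conjcK.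
Qed.

Lemma hdot_conj_normal_neq0 : hdot u u != 0.
Proof.
rewrite hdot_conj_normal mxE psumr_eq0 => [|j _]; last first.
  by rewrite !mxE mulrC mulcJ_ge0.
apply: contra hyperplane_normal_neq0 => /allP y0; apply/eqP/rowP => j.
have := y0 j (mem_index_enum j).
by rewrite !mxE implyTb mulf_eq0 conjc_eq0 orbb => /eqP.
Qed.

Lemma inP_hyperplane x : inP P x <-> x *m y^T = 0.
Proof.
have yP : y *m P^T = 0 by apply/sub_kermxP/nz_row_sub.
have PK : (P <= kermx y^T)%MS.
  by apply/sub_kermxP; rewrite -[P]trmxK -trmx_mul yP trmx0.
have rank_y : \rank y^T = 1%N.
  apply/eqP; rewrite mxrank_tr eqn_leq rank_leq_row lt0n mxrank_eq0.
  exact: hyperplane_normal_neq0.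
have KP : (kermx y^T <= P)%MS.
  have := (mxrank_leqif_eq PK).2; rewrite mxrank_ker rank_y rankP subn1 eqxx.
  by move/esym/andP => [].
split=> [xP | /sub_kermxP xK]; last exact: submx_trans xK KP.
exact/sub_kermxP/(submx_trans xP PK).
Qed.

Lemma perpP_conj_normal c : perpP P (c *: u).
Proof.
move=> p /inP_hyperplane py0; rewrite /hdot.
have -> : conjmx (c *: u) = c^*%C *: y.
  by apply/rowP=> j; rewrite !mxE rmorphM /= conjcK.
by rewrite linearZ /= -scalemxAr py0 scaler0 mxE.
Qed.

Definition hyperplane_rotmx (beta : R) : 'M[C]_n :=
  1%:M + ((expi beta - 1) / hdot u u) *: (y^T *m u).

Lemma det_hyperplane_rotmx beta : \det (hyperplane_rotmx beta) = expi beta.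
Proof.
rewrite /hyperplane_rotmx scalemxAl det1Dmul -scalemxAr mxE.
by rewrite -hdot_conj_normal divfK ?hdot_conj_normal_neq0 // addrC subrK.
Qed.

Lemma is_rotationE beta f :
  is_rotation beta P f -> f =1 mulmx^~ (hyperplane_rotmx beta).
Proof.
case=> fD _ fP fQ x; set c := hdot x u / hdot u u.
have xP : inP P (x - c *: u).
  apply/inP_hyperplane; rewrite mulmxBl -scalemxAl.
  rewrite [x *m _]mx11_scalar [u *m _]mx11_scalar -!hdot_conj_normal.
  by rewrite scale_scalar_mx divfK ?hdot_conj_normal_neq0 // subrr.
rewrite -{1}(subrK (c *: u) x) fD fP // (fQ _ (perpP_conj_normal _)).
rewrite mulmxDr mulmx1 -scalemxAr mulmxA [x *m _]mx11_scalar mul_scalar_mx.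
rewrite -hdot_conj_normal !scalerA -addrA -scaleNr -scalerDl.
by congr (x + _ *: _); rewrite /c; ring.
Qed.

Lemma image_form_hyperplane_rotation beta f om :
  is_rotation beta P f -> is_image_form f (@w0 R n) om ->
  forall v, om v = complex.Re (expi (- beta) * \det (rows v)).
Proof.
move=> /is_rotationE fE om_f v; set M := hyperplane_rotmx beta.
have M_unit : M \in unitmx.
  by rewrite unitmxE det_hyperplane_rotmx unitfE expi_neq0.
have fK : (fun j => f (v j *m invmx M)) = v.
  by apply: funext => j; rewrite fE mulmxKV.
rewrite -{1}fK om_f /w0 rows_mulmx det_mulmx det_inv det_hyperplane_rotmx.
by rewrite expiN mulrC.
Qed.

End HyperplaneRotation.

Lemma SL_calibration_expi_det (R : realType) n theta (om : nform R n) :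
  (forall v, om v = complex.Re (expi theta * \det (rows v))) -> SL_calibration om.
Proof.
move=> omE; exists theta, 1%:M; split=> [|v].
  by rewrite /unitary /adjmx map_mx1 trmx1 mulmx1.
by rewrite omE trmx1 mulmx1.
Qed.

Theorem lemma4 (R : realType) (n : nat) (P : 'M[R[i]]_n) (k : nat) (alpha : R)
  (rot : nat -> vec R n -> vec R n) (w : nat -> nform R n) :
  (2 <= n)%N ->
  \rank P = n.-1 ->
  (0 < k)%N ->
  k%:R * alpha = 2 * pi ->
  0 < alpha <= pi ->
  (forall i : nat, is_rotation (i%:R * alpha) P (rot i)) ->
  (forall i : nat, is_image_form (rot i) (w0 (n:=n)) (w i)) ->
  (forall i : nat, (i < k)%N -> SL_calibration (w i)) /\
  (forall v : 'I_n -> vec R n, \sum_(i < k) w i v = 0).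
Proof.
move=> n_gt1 rankP _ k_alpha alpha_range rot_i w_i.
have wE i := image_form_hyperplane_rotation (ltnW n_gt1) rankP (rot_i i) (w_i i).
split=> [i _ | v]; first exact: SL_calibration_expi_det (wE i).
under eq_bigr => i _ do rewrite wE -mulrN expiMn.
rewrite -raddf_sum -mulr_suml sum_expr_eq0 ?mul0r //.
  by rewrite -expiMn mulrN k_alpha expiN expi2pi invr1.
by rewrite expiN invr_eq1 expi_neq1.
Qed.
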